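(* Let $p_1,p_2$ be real bivariate polynomials with $p_1\neq 0$, $\deg p_2\le \deg p_1+1$, and suppose $p_1$ has no multiple factors. Then there is $\epsilon_0>0$ such that for every $\epsilon$ with $|\epsilon|<\epsilon_0$ the polynomial $p_1+\epsilon p_2$ has no multiple factors.
   Context: A polynomial $p$ has a multiple factor if $r^2$ divides $p$ for some polynomial $r$ of degree $\ge 1$. *)

From HB Require Import structures.
From mathcomp Require Import all_boot all_order all_algebra.
From mathcomp Require Import reals.
From mathcomp Require Import mpoly.
Set Implicit Arguments. Unset Strict Implicit. Unset Printing Implicit Defensive.
Import Order.TTheory GRing.Theory Num.Theory.
Local Open Scope ring_scope.

(* Real bivariate polynomials: {mpoly R[2]} with R : realType.
   Total degree: msize p = 1 + total degree of p (msize 0 = 0). *)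

Definition has_multiple_factor (R : realType) (p : {mpoly R[2]}) : Prop :=
  exists r : {mpoly R[2]}, (1 < msize r)%N /\ exists q : {mpoly R[2]}, p = r ^+ 2 * q.

From HB Require Import structures.
From mathcomp Require Import all_boot all_order all_algebra.
From mathcomp Require Import reals.
From mathcomp Require Import mpoly.
From mathcomp Require Import all_classical topology normedtype matrix_normedtype derive.
From mathcomp Require Import zify.
Set Implicit Arguments. Unset Strict Implicit. Unset Printing Implicit Defensive.
Import Order.TTheory GRing.Theory Num.Theory.
Import numFieldNormedType.Exports.
Local Open Scope ring_scope.
Local Open Scope classical_set_scope.

(* Square-freeness is stable under small perturbations, by compactness in
   coefficient space.  Polynomial sizes are measured by [cnorm M], the l1-norm
   of the coefficients of the monomials of degree < M.

   Let d = msize p1.  If p1 + e p2 = r^2 q with deg r >= 1, one may choose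
   msize r <= d+1, msize q <= d-1 and cnorm r = 1 (normalized_square_factor).
   Such pairs (r, q) are points of a finite-dimensional real coefficient space,
   on which a positive continuous function on a compact set is bounded below
   by a positive constant (square_mul_lower_bound).  This is used twice:
   - with the target 0, it gives c > 0 with c |q| <= |r^2 q| whenever |r| = 1
     (cofactor_bound); hence |q| <= B := (|p1| + |p2|) / c when |e| <= 1;
   - with the target p1, it gives mu > 0 with mu <= |r^2 q - p1| whenever
     |r| = 1 and |q| <= B, as p1 has no such factorization (square_mul_neq).
   Since r^2 q - p1 = e p2, this fails as soon as |e| |p2| < mu. *)

Lemma compact_pos_lower_bound (R : realType) (T : topologicalType)
    (S : set T) (f : T -> R) :
  compact S -> continuous f -> (forall z, S z -> 0 < f z) ->
  exists2 mu, 0 < mu & forall z, S z -> mu <= f z.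
Proof.
move=> cS cf f_gt0; have [S0|/nonemptyPn S0] := pselect (S !=set0); last first.
  by exists 1 => // z; rewrite S0.
have [c Sc cmin] := compact_EVT_min S0 cS (continuous_subspaceT cf).
rewrite inE in Sc; exists (f c); first exact: f_gt0.
by move=> z Sz; apply: cmin; rewrite inE.
Qed.

Lemma continuous_sum (R : numFieldType) (T : topologicalType) (I : Type)
    (r : seq I) (P : pred I) (f : I -> T -> R) :
  (forall i, continuous (f i)) ->
  continuous (fun z => \sum_(i <- r | P i) f i z).
Proof.
move=> f_cont; elim: r => [|i r IHr] z.
  by under eq_fun do rewrite big_nil; exact: cst_continuous.
under eq_fun do rewrite big_cons; case: (P i); last exact: IHr.
by apply: continuousD; [exact: f_cont | exact: IHr].
Qed.

Section CoefficientNorm.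
Variables (R : realType) (n : nat).
Local Notation P := {mpoly R[n]}.

Definition cnorm (M : nat) (p : P) : R := \sum_(m : 'X_{1..n < M}) `|p@_m|.

Lemma cnorm_ge0 M p : 0 <= cnorm M p.
Proof. by apply: sumr_ge0 => m _. Qed.

Lemma cnorm0 M : cnorm M 0 = 0.
Proof. by rewrite /cnorm big1 // => m _; rewrite mcoeff0 normr0. Qed.

Lemma cnormD M p q : cnorm M (p + q) <= cnorm M p + cnorm M q.
Proof.
by rewrite /cnorm -big_split /=; apply: ler_sum => m _; rewrite mcoeffD ler_normD.
Qed.

Lemma cnormZ M c p : cnorm M (c *: p) = `|c| * cnorm M p.
Proof. by rewrite /cnorm mulr_sumr; apply: eq_bigr => m _; rewrite mcoeffZ normrM. Qed.

Lemma cnorm_gt0 M p : (msize p <= M)%N -> p != 0 -> 0 < cnorm M p.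
Proof.
move=> p_size; apply: contraNT; rewrite -leNgt => p_le0.
have /psumr_eq0P coef0 : cnorm M p = 0 by apply/le_anti; rewrite p_le0 cnorm_ge0.
rewrite (mpolywE p_size) big1 // => m _.
by rewrite (normr0_eq0 (coef0 (fun _ _ => normr_ge0 _) m isT)) scale0r.
Qed.

Lemma cnorm1_neq0 M p : cnorm M p = 1 -> p != 0.
Proof. by apply: contra_eqN => /eqP ->; rewrite cnorm0 eq_sym oner_eq0. Qed.

Lemma msize_sumX k (E : 'X_{1..n < k} -> R) :
  (msize (\sum_(m : 'X_{1..n < k}) E m *: 'X_[m]) <= k)%N.
Proof.
apply: leq_trans (msize_sum _ _ _) _; apply/bigmax_leqP => m _.
by apply: leq_trans (msizeZ_le _ _) _; rewrite msizeX; apply: bmdeg.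
Qed.

Lemma cnorm_sumX k (E : 'X_{1..n < k} -> R) :
  cnorm k (\sum_(m : 'X_{1..n < k}) E m *: 'X_[m]) = \sum_(m : 'X_{1..n < k}) `|E m|.
Proof.
apply: eq_bigr => m _; rewrite raddf_sum (bigD1 m) //= big1 ?addr0.
  by rewrite mcoeffZ mcoeffX eqxx mulr1.
by move=> i /negbTE i_neq_m; rewrite mcoeffZ mcoeffX -bmeqP i_neq_m mulr0.
Qed.

Lemma msize_square_mul a b (r q : P) :
  (msize r <= a)%N -> (msize q <= b)%N -> (msize (r ^+ 2 * q) <= (a + a + b).+2)%N.
Proof.
move=> r_size q_size; apply: leq_trans (msizeM_le _ _) _.
have := msizeM_le r r; rewrite -expr2; lia.
Qed.

End CoefficientNorm.

Section CoefficientContinuity.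
Variables (R : realType) (n : nat) (T : topologicalType).
Local Notation P := {mpoly R[n]}.

Definition coef_continuous (F : T -> P) := forall m, continuous (fun z => (F z)@_m).

Lemma coef_continuousM (F G : T -> P) :
  coef_continuous F -> coef_continuous G -> coef_continuous (fun z => F z * G z).
Proof.
move=> F_cont G_cont m; under eq_fun do rewrite mcoeffM.
by apply: continuous_sum => k z; apply: continuousM; [exact: F_cont | exact: G_cont].
Qed.

Lemma coef_continuousB (F : T -> P) p :
  coef_continuous F -> coef_continuous (fun z => F z - p).
Proof.
move=> F_cont m z; under eq_fun do rewrite mcoeffB.
by apply: continuousB; [exact: F_cont | exact: cst_continuous].
Qed.

Lemma continuous_cnorm (F : T -> P) M :
  coef_continuous F -> continuous (fun z => cnorm M (F z)).
Proof.
move=> F_cont; apply: continuous_sum => m z.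
exact: (continuous_comp (F_cont m z) (@norm_continuous _ R^o _)).
Qed.

End CoefficientContinuity.

Section CoefficientSpace.
Variables (R : realType) (n a b : nat).
Local Notation P := {mpoly R[n]}.

Definition normalized_pair (r q : P) :=
  [/\ (msize r <= a)%N, cnorm a r = 1 & (msize q <= b)%N].

(* The real vector space of coefficients of such pairs, with its two
   coordinate blocks and the polynomials they describe. *)
Definition coef_space :=
  'rV[R]_(#|{: 'X_{1..n < a}}| + #|{: 'X_{1..n < b}}|).

Definition fst_poly (z : coef_space) : P :=
  \sum_(m : 'X_{1..n < a}) z ord0 (lshift _ (enum_rank m)) *: 'X_[m].

Definition snd_poly (z : coef_space) : P :=
  \sum_(m : 'X_{1..n < b}) z ord0 (rshift _ (enum_rank m)) *: 'X_[m].

Definition coef_pair (r q : P) : coef_space :=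
  row_mx (\row_i r@_(enum_val (i : 'I_#|{: 'X_{1..n < a}}|)))
         (\row_i q@_(enum_val (i : 'I_#|{: 'X_{1..n < b}}|))).

Lemma fst_coef_pair r q : (msize r <= a)%N -> fst_poly (coef_pair r q) = r.
Proof.
move=> r_size; rewrite [RHS](mpolywE r_size); apply: eq_bigr => m _.
by rewrite row_mxEl mxE enum_rankK.
Qed.

Lemma snd_coef_pair r q : (msize q <= b)%N -> snd_poly (coef_pair r q) = q.
Proof.
move=> q_size; rewrite [RHS](mpolywE q_size); apply: eq_bigr => m _.
by rewrite row_mxEr mxE enum_rankK.
Qed.

Lemma msize_fst z : (msize (fst_poly z) <= a)%N. Proof. exact: msize_sumX. Qed.
Lemma msize_snd z : (msize (snd_poly z) <= b)%N. Proof. exact: msize_sumX. Qed.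

Lemma coef_continuous_fst : coef_continuous fst_poly.
Proof.
move=> m; under eq_fun do rewrite raddf_sum.
apply: continuous_sum => i z /=; under eq_fun do rewrite mcoeffZ.
by apply: continuousM; [exact: coord_continuous | exact: cst_continuous].
Qed.

Lemma coef_continuous_snd : coef_continuous snd_poly.
Proof.
move=> m; under eq_fun do rewrite raddf_sum.
apply: continuous_sum => i z /=; under eq_fun do rewrite mcoeffZ.
by apply: continuousM; [exact: coord_continuous | exact: cst_continuous].
Qed.

Lemma coord_le_cnorm (z : coef_space) j :
  `|z ord0 j| <= Num.max (cnorm a (fst_poly z)) (cnorm b (snd_poly z)).
Proof.
rewrite !cnorm_sumX le_max; case: (split_ordP j) => i ->; apply/orP; [left|right].
  by rewrite (bigD1 (enum_val i)) //= enum_valK lerDl sumr_ge0.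
by rewrite (bigD1 (enum_val i)) //= enum_valK lerDl sumr_ge0.
Qed.

Lemma bounded_coef_compact (A : set coef_space) C : closed A ->
  (forall z, A z -> cnorm a (fst_poly z) <= C /\ cnorm b (snd_poly z) <= C) ->
  compact A.
Proof.
move=> A_closed A_bounded; apply: bounded_closed_compact => //.
exists C; split; first by rewrite num_real.
move=> x C_lt_x z Az; have [fst_le snd_le] := A_bounded z Az.
rewrite /= (_ : `|z| = mx_norm z) // mx_normrE; apply: bigmax_le => [|ij _].
  exact: le_trans (cnorm_ge0 _ _) (le_trans fst_le (ltW C_lt_x)).
rewrite (ord1 ij.1); apply: le_trans (coord_le_cnorm z ij.2) _.
by rewrite ge_max !(le_trans _ (ltW C_lt_x)).
Qed.

Lemma square_mul_lower_bound (p : P) (K : set R) C M :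
  closed K -> (forall x, K x -> x <= C) ->
  ((a + a + b).+2 <= M)%N -> (msize p <= M)%N ->
  (forall r q, normalized_pair r q -> K (cnorm b q) -> r ^+ 2 * q != p) ->
  exists2 mu, 0 < mu & forall r q, normalized_pair r q -> K (cnorm b q) ->
    mu <= cnorm M (r ^+ 2 * q - p).
Proof.
move=> K_closed K_bounded abM p_size r2q_neq.
pose S := [set z | cnorm a (fst_poly z) = 1 /\ K (cnorm b (snd_poly z))].
pose F z := fst_poly z * fst_poly z * snd_poly z - p.
have F_cont : coef_continuous F.
  apply: coef_continuousB; apply: coef_continuousM; last exact: coef_continuous_snd.
  by apply: coef_continuousM; exact: coef_continuous_fst.
have S_compact : compact S.
  apply: (@bounded_coef_compact _ (Num.max 1 C)).
    apply: closedI.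
      apply: (@preimage_closed _ _ (fun z => cnorm a (fst_poly z)) [set x | x = 1])
        (@closed_eq _ 1) => z _.
      exact: continuous_cnorm coef_continuous_fst z.
    apply: (@preimage_closed _ _ (fun z => cnorm b (snd_poly z)) K) K_closed => z _.
    exact: continuous_cnorm coef_continuous_snd z.
  by move=> z [z_norm /K_bounded Kz]; rewrite z_norm !le_max lexx Kz orbT.
have [mu mu_gt0 mu_le] : exists2 mu, 0 < mu & forall z, S z -> mu <= cnorm M (F z).
  apply: compact_pos_lower_bound S_compact (continuous_cnorm F_cont) _.
  move=> z [z_norm Kz]; apply: cnorm_gt0.
    rewrite /F -expr2; apply: leq_trans (msizeD_le _ _) _.
    by rewrite msizeN geq_max p_size (leq_trans (msize_square_mul (msize_fst z) (msize_snd z))).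
  by rewrite /F subr_eq0 -expr2 r2q_neq //; split; rewrite ?msize_fst ?msize_snd.
exists mu => // r q [r_size r_norm q_size] Kq.
have := mu_le (coef_pair r q); rewrite /F fst_coef_pair // snd_coef_pair // -expr2.
by apply; rewrite /S /= fst_coef_pair // snd_coef_pair.
Qed.

(* Homogeneity turns the lower bound with target 0 into a bound on the
   cofactor: c |q| <= |r^2 q| for every normalized pair (r, q). *)
Lemma cofactor_bound M : ((a + a + b).+2 <= M)%N ->
  exists2 c, 0 < c & forall r q, normalized_pair r q ->
    c * cnorm b q <= cnorm M (r ^+ 2 * q).
Proof.
move=> abM.
have [c c_gt0 c_le] : exists2 c, 0 < c & forall r q, normalized_pair r q ->
    cnorm b q = 1 -> c <= cnorm M (r ^+ 2 * q - 0).
  apply: (@square_mul_lower_bound 0 [set x | x = 1] 1) => //.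
  - by move=> x ->.
  - by rewrite msize0.
  - move=> r q [_ /cnorm1_neq0 r_neq0 _] /cnorm1_neq0 q_neq0.
    by rewrite mulf_neq0 ?expf_neq0.
exists c => // r q [r_size r_norm q_size].
have [->|q_neq0] := eqVneq q 0; first by rewrite cnorm0 mulr0 cnorm_ge0.
have t_gt0 : 0 < cnorm b q by apply: cnorm_gt0.
have t_inv_ge0 : 0 <= (cnorm b q)^-1 by rewrite invr_ge0 ltW.
have := c_le r ((cnorm b q)^-1 *: q).
rewrite subr0 -scalerAr !cnormZ ger0_norm // mulVf ?gt_eqF //.
rewrite ler_pdivlMl // mulrC; apply => //; split => //.
exact: leq_trans (msizeZ_le _ _) q_size.
Qed.

End CoefficientSpace.

Section SquareFactors.
Variables (R : realType) (n : nat).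
Local Notation P := {mpoly R[n]}.

Lemma msize_gt0 (p : P) : p != 0 -> (0 < msize p)%N.
Proof. by rewrite lt0n mmeasure_poly_eq0. Qed.

Lemma bounded_square_factor d (f r q : P) :
  (1 < msize r)%N -> f = r ^+ 2 * q -> (msize f <= d.+1)%N ->
  exists r', exists q',
    [/\ r' != 0, (msize r' <= d.+1)%N, (msize q' <= d.-1)%N & f = r' ^+ 2 * q'].
Proof.
move=> r_size f_eq f_size.
have [q0|q_neq0] := eqVneq q 0.
  by exists 1, 0; rewrite oner_neq0 msize1 msize0 f_eq q0 !mulr0.
have r_neq0 : r != 0 by apply: contraTneq r_size => ->; rewrite msize0.
have f_size_eq : msize f = ((msize r + msize r).-1 + msize q).-1.
  by rewrite f_eq expr2 !msizeM ?mulf_neq0.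
have := msize_gt0 q_neq0; exists r, q; split => //; lia.
Qed.

(* Rescaling r by the inverse of its norm normalizes a factorization. *)
Lemma normalize_square_factor a b (r q : P) :
  r != 0 -> (msize r <= a)%N -> (msize q <= b)%N ->
  exists r', exists q', normalized_pair a b r' q' /\ r ^+ 2 * q = r' ^+ 2 * q'.
Proof.
move=> r_neq0 r_size q_size; have s_gt0 : 0 < cnorm a r by apply: cnorm_gt0.
have s_inv_ge0 : 0 <= (cnorm a r)^-1 by rewrite invr_ge0 ltW.
exists ((cnorm a r)^-1 *: r), (cnorm a r ^+ 2 *: q); split; first split.
- exact: leq_trans (msizeZ_le _ _) r_size.
- by rewrite cnormZ ger0_norm // mulVf ?gt_eqF.
- exact: leq_trans (msizeZ_le _ _) q_size.
rewrite exprZn -scalerAl -scalerAr scalerA exprVn mulVf ?scale1r //.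
by rewrite expf_neq0 ?gt_eqF.
Qed.

Lemma normalized_square_factor d (f r q : P) :
  (1 < msize r)%N -> f = r ^+ 2 * q -> (msize f <= d.+1)%N ->
  exists r', exists q', normalized_pair d.+1 d.-1 r' q' /\ f = r' ^+ 2 * q'.
Proof.
move=> r_size f_eq f_size.
have [r' [q' [r'_neq0 r'_size q'_size ->]]] := bounded_square_factor r_size f_eq f_size.
exact: normalize_square_factor.
Qed.

End SquareFactors.

(* A polynomial without multiple factors is not r^2 q with q of smaller size:
   r would be a constant, so r^2 q would have the size of q. *)
Lemma square_mul_neq (R : realType) (p r q : {mpoly R[2]}) :
  ~ has_multiple_factor p -> r != 0 -> (msize q < msize p)%N -> r ^+ 2 * q != p.
Proof.
move=> p_sqfree r_neq0 q_size; apply/eqP => p_eq.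
have [r_size|r_const] := leqP 2 (msize r).
  by apply: p_sqfree; exists r; split => //; exists q.
have r_eqC := msize1_polyC r_const.
have c_neq0 : r@_0 != 0 by apply: contra_neq r_neq0 => c0; rewrite r_eqC c0.
move: q_size; rewrite -p_eq r_eqC -rmorphXn mul_mpolyC msizeZ ?expf_neq0 //.
by rewrite ltnn.
Qed.

Local Close Scope classical_set_scope.

Theorem mainTheorem4 (R : realType) (p1 p2 : {mpoly R[2]}) :
  p1 != 0 ->
  (msize p2 <= (msize p1).+1)%N ->
  ~ has_multiple_factor p1 ->
  exists2 e0 : R, 0 < e0 &
    forall e : R, `|e| < e0 -> ~ has_multiple_factor (p1 + e *: p2).
Proof.
move=> p1_neq0 p2_size p1_sqfree.
have d_gt0 := msize_gt0 p1_neq0.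
pose a := (msize p1).+1; pose b := (msize p1).-1; pose M := (a + a + b).+2.
have p1_size : (msize p1 <= M)%N by rewrite /M /a; lia.
have [c c_gt0 c_le] := @cofactor_bound R 2 a b M (leqnn _).
pose B := (cnorm M p1 + cnorm M p2) / c.
have [mu mu_gt0 mu_le] : exists2 mu, 0 < mu & forall r q, normalized_pair a b r q ->
    cnorm b q <= B -> mu <= cnorm M (r ^+ 2 * q - p1).
  apply: (@square_mul_lower_bound _ _ _ _ p1 [set x | x <= B] B) => //.
  move=> r q [_ /cnorm1_neq0 r_neq0 q_size] _.
  by apply: square_mul_neq => //; rewrite (leq_ltn_trans q_size) // /b; lia.
have p2_norm_gt0 : 0 < cnorm M p2 + 1 by rewrite ltr_wpDl ?cnorm_ge0.
exists (Num.min 1 (mu / (cnorm M p2 + 1))) => [|e].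
  by rewrite lt_min ltr01 divr_gt0.
rewrite lt_min ltr_pdivlMr // => /andP[e_lt1 e_small] [r [r_size [q f_eq]]].
have f_size : (msize (p1 + e *: p2) <= (msize p1).+1)%N.
  by rewrite (leq_trans (msizeD_le _ _)) // geq_max leqnSn (leq_trans (msizeZ_le _ _)).
have [r' [q' [r'q' f_eq']]] := normalized_square_factor r_size f_eq f_size.
have f_norm : cnorm M (p1 + e *: p2) <= cnorm M p1 + cnorm M p2.
  by rewrite (le_trans (cnormD _ _ _)) // lerD2l cnormZ ler_piMl ?cnorm_ge0 ?ltW.
have q'_norm : cnorm b q' <= B.
  by rewrite ler_pdivlMr // mulrC (le_trans (c_le _ _ r'q')) // -f_eq'.
have := mu_le r' q' r'q' q'_norm; rewrite -f_eq' addrC addKr cnormZ.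
apply/negP; rewrite -ltNge (le_lt_trans _ e_small) //.
by rewrite mulrDr mulr1 lerDl ?normr_ge0.
Qed.
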